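(* Let $n$ be divisible by $f_Kh_K$, $m=|\mu(K)|$, let $\pi\in W_0^K(p,n)$, and let $\bar\pi\in W_0^K(p^\infty)$ be its image (the class of $\pi^n\in W_0^K(p^n)$). Then the fixed field in $\mathbb{Q}^{\mathrm{al}}$ of the stabilizer $\{\sigma\in\mathrm{Gal}(\mathbb{Q}^{\mathrm{al}}/\mathbb{Q}):\sigma\bar\pi=\bar\pi\}$ equals $\mathbb{Q}[\pi^{mn}]$; equivalently, the centre of $\mathrm{End}(X(\bar\pi))$, where $X(\bar\pi)$ is the simple motive over $\mathbb{F}$ corresponding to $\bar\pi$, is $\mathbb{Q}[\pi^{mn}]$.
   Context: $\mathbb{Q}^{\mathrm{al}}\subset\mathbb{C}$, $p$ prime, $K\subset\mathbb{Q}^{\mathrm{al}}$ a CM field finite Galois over $\mathbb{Q}$, $\mu(K)$ its roots of unity, $f_K$, $h_K$ the common inertia degree and class-group order of the $p$-adic primes of $K$. A Weil $q$-number of weight $0$ ($q$ a power of $p$) is an algebraic $\pi$ with $|\pi'|=1$ for all complex conjugates and $q^N\pi$ integral for some $N$. $n_w(\pi)=\frac{\mathrm{ord}_w(\pi)}{\mathrm{ord}_w(q)}[K_w:\mathbb{Q}_p]$; $W_0^K(q)$ = Weil $q$-numbers of weight $0$ in $K$ with all $n_w\in\mathbb{Z}$; $W_0^K(p^\infty)=\varinjlim W_0^K(p^n)$ (transition maps $\pi\mapsto\pi^{n'/n}$), a Galois module; $W_0^K(p,n)$ = Weil $p$-numbers of weight $0$ with $\pi^n\in W_0^K(p^n)$.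 $\mathbb{Q}[\pi^{mn}]$ is the subfield of $\mathbb{Q}^{\mathrm{al}}$ generated by $\pi^{mn}$. $\mathbb{F}$ is an algebraic closure of $\mathbb{F}_p$; assuming the Tate conjecture, simple motives over $\mathbb{F}$ (numerical equivalence) correspond to Galois orbits of elements of $\varinjlim_n W(p^n)$ (Weil numbers), and the centre of $\mathrm{End}(X(\bar\pi))$ is the fixed field of the stabilizer of $\bar\pi$. *)

(* Q^al is modelled by mathcomp's algC (algebraic closure of Q
   with its complex conjugation / norm). *)
From HB Require Import structures.
From mathcomp Require Import all_boot all_order all_algebra all_field.
Unset Printing Implicit Defensive.
Import Order.TTheory GRing.Theory Num.Theory.
Local Open Scope ring_scope.

(* Elements of Gal(Q^al/Q): field automorphisms of algC. *)
Definition isGal (s : {rmorphism algC -> algC}) : Prop := bijective s.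

(* Q[a]: the subfield of Q^al generated by a (a is algebraic, so Q[a] = Q(a)). *)
Definition Qgen (a x : algC) : Prop :=
  exists q : {poly rat}, x = (map_poly (ratr : rat -> algC) q).[a].

(* K (a subset of algC) is Galois over Q: stable under Gal(Q^al/Q). *)
Definition GaloisQ (K : algC -> Prop) : Prop :=
  forall s, isGal s -> forall x, K x -> K (s x).

Definition totally_real (F : algC -> Prop) : Prop :=
  forall s, isGal s -> forall x, F x -> s x \is Num.real.

Definition totally_imaginary (K : algC -> Prop) : Prop :=
  forall s, isGal s -> exists x, K x /\ s x \isn't Num.real.

Definition CMfield (K : algC -> Prop) : Prop :=
  exists beta alpha : algC,
    (forall x, Qgen beta x -> K x) /\ K alpha /\ ~ Qgen beta alpha /\
    (forall x, K x -> exists a b, Qgen beta a /\ Qgen beta b /\ x = a + b * alpha) /\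
    totally_real (Qgen beta) /\ totally_imaginary K.

Definition OK (K : algC -> Prop) (x : algC) : Prop := K x /\ x \in Aint.

Definition padic_prime (K : algC -> Prop) (p : nat) (w : algC -> Prop) : Prop :=
  (forall x, w x -> OK K x) /\ w 0 /\
  (forall x y, w x -> w y -> w (x + y)) /\
  (forall a x, OK K a -> w x -> w (a * x)) /\
  ~ w 1 /\
  (forall x y, OK K x -> OK K y -> w (x * y) -> w x \/ w y) /\
  w p%:R.

Fixpoint idpow (K : algC -> Prop) (w : algC -> Prop) (k : nat) (x : algC) : Prop :=
  match k with
  | 0 => OK K x
  | k'.+1 => exists s : seq (algC * algC),
      (forall u, u \in s -> w u.1 /\ idpow K w k' u.2) /\
      x = \sum_(u <- s) u.1 * u.2
  end.

Definition vint (K w : algC -> Prop) (y : algC) (k : nat) : Prop :=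
  idpow K w k y /\ ~ idpow K w k.+1 y.

Definition ordw (K w : algC -> Prop) (x : algC) (k : int) : Prop :=
  exists y z : algC, [/\ OK K y, OK K z, y != 0, z != 0 & x = y / z] /\
    exists ky kz : nat, [/\ vint K w y ky, vint K w z kz & k = ky%:Z - kz%:Z].

(* residue degree f_w : |O_K / w| = p ^ f *)
Definition resdeg (K : algC -> Prop) (p : nat) (w : algC -> Prop) (f : nat) : Prop :=
  exists s : seq algC,
    [/\ size s = (p ^ f)%N, (forall r, r \in s -> OK K r),
        (forall i j, (i < size s)%N -> (j < size s)%N -> i <> j ->
           ~ w (nth 0 s i - nth 0 s j))
      & (forall x, OK K x -> exists r, r \in s /\ w (x - r))].

(* local degree [K_w : Q_p] = e_w f_w *)
Definition localdeg (K : algC -> Prop) (p : nat) (w : algC -> Prop) (d : nat) : Prop :=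
  exists e f : nat, [/\ ordw K w p%:R e%:Z, resdeg K p w f & d = (e * f)%N].

Definition nw_int (K : algC -> Prop) (p : nat) (w : algC -> Prop) (q x : algC) : Prop :=
  forall (k kq : int) (d : nat), ordw K w x k -> ordw K w q kq -> localdeg K p w d ->
    ((k%:~R / kq%:~R * d%:R : rat) \is a Num.int).

Definition Weil0 (p a : nat) (x : algC) : Prop :=
  (forall s, isGal s -> `|s x| = 1) /\
  exists N : nat, ((p%:R ^+ a) ^+ N * x) \in Aint.

Definition W0K (K : algC -> Prop) (p a : nat) (x : algC) : Prop :=
  [/\ K x, Weil0 p a x & forall w, padic_prime K p w -> nw_int K p w (p%:R ^+ a) x].

Definition W0Kpn (K : algC -> Prop) (p n : nat) (x : algC) : Prop :=
  Weil0 p 1 x /\ W0K K p n (x ^+ n).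

(* equality in W_0^K(p^oo) = colim_n W_0^K(p^n), transition maps x |-> x^(n'/n):
   the classes of x in W(p^n) and y in W(p^n') agree *)
Definition wlim_eq (xn yn : algC * nat) : Prop :=
  exists N : nat, [/\ (0 < N)%N, (xn.2 %| N)%N, (yn.2 %| N)%N &
    xn.1 ^+ (N %/ xn.2) = yn.1 ^+ (N %/ yn.2)].

Definition card_mu (K : algC -> Prop) (m : nat) : Prop :=
  exists s : seq algC, [/\ uniq s, size s = m &
    forall x, x \in s <-> (K x /\ exists k : nat, (0 < k)%N /\ x ^+ k = 1)].

Definition principal (K : algC -> Prop) (I : algC -> Prop) : Prop :=
  exists a, OK K a /\ forall x, I x <-> exists b, OK K b /\ x = a * b.

Definition classord (K w : algC -> Prop) (h : nat) : Prop :=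
  [/\ (0 < h)%N, principal K (idpow K w h) &
      forall h', (0 < h')%N -> (h' < h)%N -> ~ principal K (idpow K w h')].

From HB Require Import structures.
From mathcomp Require Import all_boot all_order all_algebra all_field.
From Stdlib Require Import Classical.
Set Implicit Arguments.
Unset Strict Implicit.
Unset Printing Implicit Defensive.

Import Order.TTheory GRing.Theory Num.Theory.
Local Open Scope ring_scope.

(* Write a := pi^n.  An automorphism s fixes the class of a in W_0^K(p^oo)
   iff s(a)/a, an element of K, is a root of unity; as roots of unity in K
   have order dividing m = |mu(K)|, this happens iff s fixes a^m = pi^(mn).
   The fixed field of the stabilizer of pi^(mn) is Q[pi^(mn)]: anything
   outside Q[b] is moved by some automorphism of Q^al fixing b, obtained by
   extending a K-embedding of a splitting field.  Beyond pi^n lying in the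
   Galois field K, none of the arithmetic hypotheses (CM, residue degrees,
   class numbers, f_K h_K | n) is needed. *)

Lemma Qgen_ratr a (c : rat) : Qgen a (ratr c).
Proof. by exists c%:P; rewrite map_polyC hornerC. Qed.

Lemma Qgen_mul a x y : Qgen a x -> Qgen a y -> Qgen a (x * y).
Proof. by move=> [q ->] [r ->]; exists (q * r); rewrite rmorphM hornerM. Qed.

Lemma Qgen_trans a b x : Qgen a b -> Qgen b x -> Qgen a x.
Proof.
by move=> [q ->] [r ->]; exists (r \Po q); rewrite map_comp_poly horner_comp.
Qed.

Lemma Qgen_fadjoin (Qs : fieldExtType rat) (QsC : {rmorphism Qs -> algC})
    (b z : Qs) :
  z \in <<1; b>>%VS -> Qgen (QsC b) (QsC z).
Proof.
case/Fadjoin_polyP => q /polyOverP q_rat ->.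
have [c Dc] := all_sig (fun i => sig_eqW (vlineP _ _ (q_rat i))).
exists (\poly_(i < size q) c i).
rewrite -horner_map /=; congr _.[_]; apply/polyP=> i.
rewrite !coef_map coef_poly /=; case: ltnP => [_ | le_q_i]; last first.
  by rewrite nth_default // !rmorph0.
by rewrite Dc alg_num_field fmorph_rat.
Qed.

Lemma Qgen_inv a y : Qgen a y -> Qgen a y^-1.
Proof.
move=> ay; apply: (Qgen_trans ay).
have [Qs [QsC [[|y1 []] //= [<-] _]]] := num_field_exists [:: y].
rewrite -fmorphV; apply: Qgen_fadjoin.
by rewrite memvV memv_adjoin.
Qed.

Lemma Qgen_fixed (nu : {rmorphism algC -> algC}) a x :
  nu a = a -> Qgen a x -> nu x = x.
Proof.
move=> nu_a [q ->]; rewrite -horner_map -map_poly_comp nu_a.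
by rewrite (eq_map_poly (fmorph_rat nu)).
Qed.

Lemma isGal_aut (nu : {rmorphism algC -> algC}) : isGal nu.
Proof. exact: Bijective (algC_autK nu) (algC_invautK nu). Qed.

Lemma Weil0_neq0 p a x : Weil0 p a x -> x != 0.
Proof.
case=> /(_ idfun (isGal_aut idfun)) /= norm_x _.
by apply: contra_eq_neq norm_x => ->; rewrite normr0 eq_sym oner_neq0.
Qed.

Lemma unity_root_neq0 (x : algC) k : (0 < k)%N -> x ^+ k = 1 -> x != 0.
Proof.
move=> k_gt0 xk; apply: contra_eq_neq xk => ->.
by rewrite expr0n -[k == 0%N]negbK -lt0n k_gt0 eq_sym oner_neq0.
Qed.

Section RootsOfUnity.

Variables (K : algC -> Prop) (m : nat).
Hypotheses (mu_m : card_mu K m) (mulK : forall x y, K x -> K y -> K (x * y)).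

Lemma card_mu_gt0 : K 1 -> (0 < m)%N.
Proof.
case: mu_m => s [_ <- mu_s] K1; have: 1 \in s by apply/mu_s; split; last by exists 1%N.
by case: s {mu_s}.
Qed.

(* Multiplication by z permutes mu(K), so comparing the products of its
   elements before and after gives z^m = 1. *)
Lemma card_mu_expr_eq1 z k : K z -> (0 < k)%N -> z ^+ k = 1 -> z ^+ m = 1.
Proof.
case: mu_m => s [uniq_s size_s mu_s] Kz k_gt0 zk.
have z_neq0 := unity_root_neq0 k_gt0 zk.
have zs_sub : {subset [seq z * x | x <- s] <= s}.
  move=> _ /mapP[x /mu_s[Kx [j [j_gt0 xj]]] ->]; apply/mu_s; split; first exact: mulK.
  exists (k * j)%N; split; first by rewrite muln_gt0 k_gt0.
  by rewrite exprMn exprM zk expr1n mulnC exprM xj expr1n mulr1.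
have zs_uniq : uniq [seq z * x | x <- s].
  by rewrite map_inj_uniq //; apply: mulfI.
have zs_perm : perm_eq [seq z * x | x <- s] s.
  apply: (uniq_perm zs_uniq uniq_s).
  by apply: (uniq_min_size zs_uniq zs_sub _).2; rewrite size_map.
have prod_neq0 : \prod_(x <- s) x != 0.
  rewrite prodf_seq_neq0; apply/allP => x /mu_s[_ [j [j_gt0 xj]]].
  exact: unity_root_neq0 xj.
apply: (mulIf prod_neq0); rewrite mul1r -size_s.
rewrite -[RHS](perm_big _ zs_perm) big_map big_split /=.
by rewrite big_const_seq count_predT iter_mulr_1.
Qed.

Lemma wlim_eq_card_mu n (a b : algC) :
    (0 < m)%N -> (0 < n)%N -> a != 0 -> K (b / a) ->
  wlim_eq (b, n) (a, n) <-> b ^+ m = a ^+ m.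
Proof.
move=> m_gt0 n_gt0 a_neq0 Kba; have an_neq0 j : a ^+ j != 0 by rewrite expf_neq0.
split=> [[N [N_gt0 _ dvd_n_N /= eqN]] | eqm].
  have N_n_gt0 : (0 < N %/ n)%N by rewrite divn_gt0 // dvdn_leq.
  have := card_mu_expr_eq1 Kba N_n_gt0; rewrite !exprMn !exprVn eqN divff //.
  by move=> /(_ erefl) ba_m; rewrite -[LHS](mulfVK (an_neq0 m)) ba_m mul1r.
exists (m * n)%N; split; rewrite ?muln_gt0 ?m_gt0 ?dvdn_mull //=.
by rewrite mulnK.
Qed.

End RootsOfUnity.

Section MovingOffSubfield.

Variables (F : fieldType) (L : fieldExtType F).

Lemma minPoly_other_root (E : {subfield L}) x (rs : seq L) :
    separable_element E x -> x \notin E ->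
    minPoly E x %| \prod_(r <- rs) ('X - r%:P) ->
  exists2 y, root (minPoly E x) y & y != x.
Proof.
move=> sep_x xNE /dvdp_prod_XsubC[msk]; set r := mask msk rs => Dmin.
have uniq_r : uniq r by rewrite -separable_prod_XsubC -(eqp_separable Dmin).
have root_r y : root (minPoly E x) y = (y \in r).
  by rewrite (eqp_root Dmin) root_prod_XsubC.
have size_r : size r = adjoin_degree E x.
  by have := size_minPoly E x; rewrite (eqp_size Dmin) size_prod_XsubC => -[].
clearbody r; clear Dmin.
case: r uniq_r root_r size_r => [|y1 [|y2 r']] /=.
- by move=> _ /(_ x); rewrite root_minPoly in_nil.
- by move=> _ _ /esym/eqP; rewrite adjoin_deg_eq1 (negPf xNE).
rewrite inE => /andP[/norP[y12 _] _] root_r _.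
have [y1x | y1x] := eqVneq y1 x; last by exists y1; rewrite // root_r inE eqxx.
by exists y2; rewrite ?root_r ?inE ?eqxx ?orbT // -y1x eq_sym.
Qed.

Lemma kHom_moving (E : {subfield L}) x (rs : seq L) :
    separable_element E x -> x \notin E -> x \in rs ->
    \prod_(r <- rs) ('X - r%:P) \is a polyOver E -> <<E & rs>>%VS = fullv ->
  exists2 g : 'End(L), kHom E fullv g & g x != x.
Proof.
set P := \prod_(r <- rs) _ => sep_x xNE x_rs P_E gen_rs.
have minP : minPoly E x %| P by apply: minPoly_dvdp; rewrite // root_prod_XsubC.
have [y root_y y_neq_x] := minPoly_other_root sep_x xNE minP.
have root_y_id : root (map_poly (\1%VF : 'End(L)) (minPoly E x)) y.
  by rewrite (eq_map_poly (fun v => id_lfunE v)) map_poly_id.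
have splitP : splittingFieldFor <<E; x>> P fullv.
  exists rs; first exact: eqpxx.
  apply/eqP; rewrite eqEsubv subvf -gen_rs.
  by apply: adjoin_seqSl; apply: subv_adjoin.
have [g hom_g Dg] := kHom_extends (subv_adjoin E x)
  (kHomExtendP (subvv E) (kHom1 E E) root_y_id) P_E splitP.
exists g => //; rewrite -Dg ?memv_adjoin //.
by rewrite (kHomExtend_val (kHom1 E E) root_y_id).
Qed.

End MovingOffSubfield.

Lemma algC_aut_moving (b x : algC) : ~ Qgen b x ->
  exists nu : {rmorphism algC -> algC}, nu b = b /\ nu x != x.
Proof.
move=> xNb; have [rs Drs] := closed_field_poly_normal (minCpoly x).
rewrite (monicP (minCpoly_monic x)) scale1r in Drs.
have x_rs : x \in rs by rewrite -root_prod_XsubC -Drs root_minCpoly.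
have [Qs [QsC [[|b1 rs1] //= [Db Drs1] gen]]] := num_field_exists (b :: rs).
have [x1 x1_rs1 Dx] : exists2 x1, x1 \in rs1 & x = QsC x1.
  by apply/mapP; rewrite Drs1.
pose E := <<1; b1>>%AS.
have x1NE : x1 \notin E by apply/negP => /(Qgen_fadjoin QsC); rewrite Db -Dx.
have sep_x1 : separable_element E x1.
  exact: (pcharf0_separable E (ftrans (pchar_lalg Qs) (pchar_num _)) x1).
have rs1_rat : \prod_(r <- rs1) ('X - r%:P) \is a polyOver 1%VS.
  have [q [Dq _] _] := minCpolyP x.
  suff -> : \prod_(r <- rs1) ('X - r%:P) = map_poly (in_alg Qs) q.
    by apply/polyOverP => i; rewrite coef_map /= memvZ // mem1v.
  apply: (map_poly_inj QsC); rewrite rmorph_prod -map_poly_comp /=.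
  rewrite (eq_bigr (fun r => 'X - (QsC r)%:P)) => [|r _]; last exact: map_polyXsubC.
  rewrite -(big_map QsC xpredT (fun r => 'X - r%:P)) Drs1 -Drs Dq.
  by apply: eq_map_poly => c /=; rewrite alg_num_field fmorph_rat.
have gen_rs1 : <<E & rs1>>%VS = fullv by rewrite -gen adjoin_cons.
have [g hom_g gx1] := kHom_moving sep_x1 x1NE x1_rs1
  (polyOverSv (sub1v E) rs1_rat) gen_rs1.
have gM : monoid_morphism g.
  by apply/kHom_monoid_morphism; apply: kHomSl (sub1v _) hom_g.
pose gR : {rmorphism Qs -> Qs} :=
  HB.pack (fun_of_lfun g) (GRing.isMonoidMorphism.Build _ _ _ gM).
have [nu QsC_nu] := extend_algC_subfield_aut QsC gR.
exists nu; split.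
  have [g_E _] := kHomP_tmp hom_g.
  by rewrite -Db -QsC_nu /= g_E // memv_adjoin.
by rewrite Dx -QsC_nu /= (inj_eq (fmorph_inj QsC)).
Qed.

Theorem mainTheorem9 (p : nat) (theta : algC) (fK hK n m : nat) (pi : algC) :
  prime p ->
  GaloisQ (Qgen theta) -> CMfield (Qgen theta) ->
  (forall w, padic_prime (Qgen theta) p w ->
     resdeg (Qgen theta) p w fK /\ classord (Qgen theta) w hK) ->
  (0 < n)%N -> (fK * hK %| n)%N ->
  card_mu (Qgen theta) m ->
  W0Kpn (Qgen theta) p n pi ->
  forall x : algC,
    (forall s : {rmorphism algC -> algC},
        isGal s -> wlim_eq (s (pi ^+ n), n) (pi ^+ n, n) -> s x = x)
    <-> Qgen (pi ^+ (m * n)) x.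
Proof.
move=> _ galK _ _ n_gt0 _ mu_m [Weil_pi [K_pin _ _]] x.
have mulK := @Qgen_mul theta.
have m_gt0 : (0 < m)%N.
  by apply: card_mu_gt0 mu_m _; rewrite -(rmorph1 ratr); apply: Qgen_ratr.
have pin_neq0 : pi ^+ n != 0 by rewrite expf_neq0 ?(Weil0_neq0 Weil_pi).
have stab s : isGal s ->
    wlim_eq (s (pi ^+ n), n) (pi ^+ n, n) <-> s (pi ^+ (m * n)) = pi ^+ (m * n).
  move=> gal_s; rewrite mulnC exprM [s (_ ^+ m)]rmorphXn.
  apply: (wlim_eq_card_mu mu_m mulK m_gt0 n_gt0 pin_neq0).
  by apply: mulK; [apply: galK | apply: Qgen_inv].
split=> [fixed | Qx s gal_s /(stab s gal_s) s_fixed]; last exact: Qgen_fixed s_fixed Qx.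
apply: NNPP => xN; have [nu [nu_fixed nu_x]] := algC_aut_moving xN.
have gal_nu := isGal_aut nu.
by move/eqP: nu_x; apply; apply: (fixed nu gal_nu); apply/(stab nu gal_nu).
Qed.
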